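(* Let $n \geq 1$ and fix integers $\lambda_2 \geq \lambda_3 \geq \cdots \geq \lambda_n \geq 0$. For integers $\lambda_1 \geq \lambda_2$ let $\lambda = (\lambda_1, \lambda_2, \ldots, \lambda_n)$. Then $A_\lambda(n)$, regarded as a function of $\lambda_1$, is a polynomial in $\lambda_1$ of degree $n-1$.
   Context: Six-vertex model: on an $r \times c$ grid there are $r$ horizontal lines and $c$ vertical lines meeting in $rc$ vertices. Each horizontal line consists of $c+1$ edges (the outermost ones are a left and a right boundary edge) and each vertical line of $r+1$ edges (the outermost ones are a top and a bottom boundary edge). A state assigns an orientation to every edge (left/right for horizontal edges, up/down for vertical edges), agreeing with prescribed orientations on the boundary edges, such that at every vertex exactly two of the four adjacent edges point into the vertex and two point out of it. For a partition $\lambda = (\lambda_1, \ldots, \lambda_n)$ (integers $\lambda_1 \geq \cdots \geq \lambda_n \geq 0$), $A_\lambda(n)$ is the number of states of the six-vertex model on the grid with $n$ rows and $n + \lambda_1$ columns with boundary conditions: all left boundary arrows point right, all right boundary arrows point left, all bottom boundary arrows point down, and, numbering the columns $1, 2, \ldots, n+\lambda_1$ from right to left, the top boundary arrow in column $i$ points up if $i \in \{\lambda_k + n + 1 - k : 1 \leq k \leq n\}$ and down otherwise. *)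

From mathcomp Require Import all_boot all_order all_algebra.
Set Implicit Arguments. Unset Strict Implicit. Unset Printing Implicit Defensive.

(* A partition lam = (lam_1, ..., lam_n) is given as a seq nat, lam_k = nth 0 lam (k-1).
   Grid: n rows (indexed i : 'I_n from top to bottom), m = n + lam_1 columns
   (indexed j : 'I_m from LEFT to right; the paper's column label, counted
   from right to left starting at 1, is m - j).
   Horizontal edges: hor (i, j) for j : 'I_m.+1; hor (i, j) is the edge to the
   left of vertex (i, j) (and j = m is the right boundary edge).
   Orientation bool: true = points right.
   Vertical edges: ver (i, j) for i : 'I_n.+1; ver (i, j) is the edge above
   vertex (i, j) (i = 0 top boundary, i = n bottom boundary).
   Orientation bool: true = points up. *)

Definition top_up (n : nat) (lam : seq nat) (c : nat) : bool :=
  has (fun k => c == nth 0 lam k + n - k) (iota 0 n).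
(* k (0-based) stands for k+1; lam_(k+1) + n + 1 - (k+1) = lam_(k+1) + n - k *)

Definition sv_state (n m : nat) : finType :=
  ({ffun 'I_n * 'I_m.+1 -> bool} * {ffun 'I_n.+1 * 'I_m -> bool})%type.

Definition sv_valid (n : nat) (lam : seq nat) (m : nat) (s : sv_state n m) : bool :=
  let hor := s.1 in let ver := s.2 in
  [&& [forall i : 'I_n, hor (i, ord0) && ~~ hor (i, ord_max)],
      [forall j : 'I_m, (ver (ord0, j) == top_up n lam (m - j)) && ~~ ver (ord_max, j)] &
      [forall i : 'I_n, forall j : 'I_m,
         (hor (i, inord j) : nat) + (~~ hor (i, inord j.+1) : nat)
         + (~~ ver (inord i, j) : nat) + (ver (inord i.+1, j) : nat) == 2]].
(* ice rule: number of edges pointing into vertex (i,j) is 2: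
   left edge points right, right edge points left, top edge points down,
   bottom edge points up. *)

Definition A (n : nat) (lam : seq nat) : nat :=
  #|[pred s : sv_state n (n + head 0 lam) | @sv_valid n lam (n + head 0 lam) s]|.

From mathcomp Require Import all_boot all_order all_algebra.
From mathcomp Require Import zify.
Set Implicit Arguments. Unset Strict Implicit. Unset Printing Implicit Defensive.
Import GRing.Theory Num.Theory.

(* Reading the grid row by row, A_lam(n) is a sum, over the intermediate rows
   of vertical arrows, of products of one-row counts R(t, b).  Only the top
   boundary depends on lam_1: from left to right it reads one up arrow, then
   d = lam_1 - lam_2 down arrows, then a word w that depends only on
   (lam_2, ..., lam_n) and contains n - 1 up arrows.  Call F_n(w, d) the count
   with this top boundary.  Following the first up arrow through the first row
   gives F_(n+1)(w, d) = c(w) + sum_(e <= d) sum_b R(w, b) F_n(b, e), so by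
   induction F_(n+1)(w, .) is a combination with natural coefficients of the
   binomials C(d, j), j <= n.  When w has n up arrows the coefficient of C(d, n)
   is positive, because the row obtained from w by turning its first up arrow
   down can follow w. *)

Lemma leq_sum_mem (T : eqType) (s : seq T) (G : T -> nat) x :
  x \in s -> G x <= \sum_(y <- s) G y.
Proof.
elim: s => [|y s IH] //; rewrite inE big_cons => /orP[/eqP <-|/IH]; first exact: leq_addr.
by move/leq_trans; apply; apply: leq_addl.
Qed.

Definition ffun_cons (X : Type) k (x : X) (g : {ffun 'I_k -> X}) : {ffun 'I_k.+1 -> X} :=
  [ffun i => if unlift ord0 i is Some j then g j else x].

Lemma ffun_cons0 (X : Type) k (x : X) g : @ffun_cons X k x g ord0 = x.
Proof. by rewrite ffunE unlift_none. Qed.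

Lemma ffun_consS (X : Type) k (x : X) g j : @ffun_cons X k x g (lift ord0 j) = g j.
Proof. by rewrite ffunE liftK. Qed.

Lemma big_ffun_cons (X : finType) k (G : {ffun 'I_k.+1 -> X} -> nat) :
  \sum_f G f = \sum_(x : X) \sum_(g : {ffun 'I_k -> X}) G (ffun_cons x g).
Proof.
rewrite pair_big /= (reindex (fun p : X * {ffun 'I_k -> X} => ffun_cons p.1 p.2)) //.
exists (fun f : {ffun 'I_k.+1 -> X} => (f ord0, [ffun j => f (lift ord0 j)])).
  move=> [x g] _ /=; rewrite ffun_cons0; congr (_, _).
  by apply/ffunP => j; rewrite ffunE ffun_consS.
by move=> f _; apply/ffunP => i; rewrite ffunE; case: unliftP => [j ->|->]; rewrite ?ffunE.
Qed.

Lemma codom_ffun_cons k (x : bool) (g : {ffun 'I_k -> bool}) :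
  codom (ffun_cons x g) = x :: codom g.
Proof.
rewrite !codomE enum_ordSl /= ffun_cons0 -map_comp.
by congr (_ :: _); apply: eq_map => j; rewrite /= ffun_consS.
Qed.

Lemma big_ffun_curry (I J X : finType) (G : {ffun I * J -> X} -> nat) :
  \sum_f G f = \sum_(g : {ffun I -> {ffun J -> X}}) G [ffun p => g p.1 p.2].
Proof.
rewrite (reindex (fun g : {ffun I -> {ffun J -> X}} => [ffun p => g p.1 p.2])) //.
exists (fun f : {ffun I * J -> X} => [ffun i => [ffun j => f (i, j)]]) => [g _|f _].
  by apply/ffunP => i; apply/ffunP => j; rewrite !ffunE.
by apply/ffunP => -[i j]; rewrite !ffunE.
Qed.

Lemma nat_of_forall (I : finType) (P : pred I) : ([forall i, P i] : nat) = \prod_i P i.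
Proof.
have [/forallP P_all|/forallPn[i /negbTE not_Pi]] := boolP [forall i, P i].
  by rewrite big1 // => i _; rewrite P_all.
by rewrite (bigD1 i) //= not_Pi.
Qed.

Lemma nth_codom_ord m (t : 'I_m -> bool) (j : 'I_m) : nth false (codom t) j = t j.
Proof. by rewrite codomE (nth_map j) ?size_enum_ord // nth_ord_enum. Qed.

Section Walks.
Variable X : finType.

Fixpoint walk_sum (K : nat -> X -> X -> nat) (e : X -> nat) (n : nat) (x : X) : nat :=
  if n is n'.+1 then \sum_y K 0 x y * walk_sum (fun i => K i.+1) e n' y else e x.

Lemma sum_walks (K : nat -> X -> X -> nat) (e : X -> nat) n x :
  \sum_(v : {ffun 'I_n.+1 -> X} | v ord0 == x)
     e (v ord_max) * \prod_(i < n) K i (v (widen_ord (leqnSn n) i)) (v (lift ord0 i))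
  = walk_sum K e n x.
Proof.
elim: n K x => [|n IH] K x /=.
  rewrite (big_pred1 [ffun=> x]) ?ffunE ?big_ord0 ?muln1 // => v /=.
  by apply/eqP/eqP => [<-|->]; [apply/ffunP => i; rewrite ffunE (ord1 i) | rewrite ffunE].
rewrite big_mkcond big_ffun_cons (bigD1 x) //= [S in _ + S]big1 ?addn0; last first.
  by move=> y /negbTE y_x; apply: big1 => g _; rewrite ffun_cons0 y_x.
rewrite (partition_big (fun g : {ffun 'I_n.+1 -> X} => g ord0) xpredT) //=.
apply: eq_bigr => y _; rewrite -IH big_distrr /=; apply: eq_bigr => g /eqP <-.
have -> : (ord_max : 'I_n.+2) = lift ord0 ord_max by apply: val_inj.
rewrite ffun_cons0 eqxx ffun_consS big_ord_recl mulnCA; congr (_ * (_ * _)).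
  by rewrite (_ : widen_ord _ _ = ord0) ?ffun_cons0 ?ffun_consS //; apply: val_inj.
apply: eq_bigr => i _; rewrite (_ : widen_ord _ _ = lift ord0 (widen_ord (leqnSn n) i)).
  by rewrite !ffun_consS.
exact: val_inj.
Qed.

End Walks.

(** * Combinations of binomial coefficients *)

Definition binomial_span (k c : nat) (f : nat -> nat) :=
  exists2 a : nat -> nat, c <= a k & forall d, f d = \sum_(j < k.+1) a j * 'C(d, j).

Lemma eq_binomial_span k c f g :
  f =1 g -> binomial_span k c f -> binomial_span k c g.
Proof. by move=> eq_fg [a c_a f_a]; exists a => // d; rewrite -eq_fg. Qed.

Lemma binomial_span_cst m : binomial_span 0 m (fun=> m).
Proof. by exists (fun=> m) => // d; rewrite big_ord1 bin0 muln1. Qed.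

Lemma binomial_span_le k c c' f : c' <= c -> binomial_span k c f -> binomial_span k c' f.
Proof. by move=> le_c [a c_a f_a]; exists a => //; apply: leq_trans c_a. Qed.

Lemma binomial_span_widen k k' c f :
  k < k' -> binomial_span k c f -> binomial_span k' 0 f.
Proof.
move=> lt_k [a _ f_a]; exists (fun j => (j <= k) * a j) => // d.
rewrite f_a (big_ord_widen_cond k'.+1 xpredT (fun j => a j * 'C(d, j))); last exact: ltnW.
rewrite big_mkcond; apply: eq_bigr => j _.
by rewrite ltnS; case: (j <= k); rewrite ?mul1n ?mul0n.
Qed.

Lemma binomial_span_add k c c' f g :
  binomial_span k c f -> binomial_span k c' g ->
  binomial_span k (c + c') (fun d => f d + g d).
Proof.
move=> [a c_a f_a] [b c_b g_b]; exists (fun j => a j + b j); first exact: leq_add.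
by move=> d; rewrite f_a g_b -big_split; apply: eq_bigr => j _; rewrite mulnDl.
Qed.

Lemma binomial_span_scale m k c f :
  binomial_span k c f -> binomial_span k (m * c) (fun d => m * f d).
Proof.
move=> [a c_a f_a]; exists (fun j => m * a j); first by rewrite leq_mul2l c_a orbT.
by move=> d; rewrite f_a big_distrr; apply: eq_bigr => j _; rewrite -mulnA.
Qed.

Lemma binomial_span_sum (I : Type) (s : seq I) k (c : I -> nat) (F : I -> nat -> nat) :
  (forall i, binomial_span k (c i) (F i)) ->
  binomial_span k (\sum_(i <- s) c i) (fun d => \sum_(i <- s) F i d).
Proof.
move=> F_span; elim: s => [|x s [a c_a F_a]].
  by exists (fun=> 0) => [|d]; rewrite big_nil // big1.
rewrite big_cons; apply: eq_binomial_span (binomial_span_add (F_span x) _).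
  by move=> d; rewrite big_cons.
by exists a.
Qed.

Lemma sum_ord_bin d j : \sum_(e < d) 'C(e, j) = 'C(d, j.+1).
Proof. by elim: d => [|d IH]; rewrite ?big_ord0 // big_ord_recr /= IH binS. Qed.

Lemma binomial_span_psum k c f :
  binomial_span k c f -> binomial_span k.+1 c (fun d => \sum_(e < d) f e).
Proof.
move=> [a c_a f_a]; exists (fun j => if j is j'.+1 then a j' else 0) => // d.
rewrite big_ord_recl mul0n add0n; under eq_bigr do rewrite f_a.
rewrite exchange_big /=; apply: eq_bigr => j _.
by rewrite -big_distrr /= sum_ord_bin.
Qed.

Lemma binomial_span_psumS k c f :
  binomial_span k c f -> binomial_span k.+1 c (fun d => \sum_(e < d.+1) f e).
Proof.
move=> f_span; rewrite -[c]addn0.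
apply: eq_binomial_span (binomial_span_add (binomial_span_psum f_span)
                           (binomial_span_widen (ltnSn k) f_span)).
by move=> d; rewrite big_ord_recr.
Qed.

(** * Transfer matrices *)

Definition ice (h h' x y : bool) : bool :=
  (h : nat) + (~~ h' : nat) + (~~ x : nat) + (y : nat) == 2.

Fixpoint row_count (h : bool) (t b : seq bool) : nat :=
  match t, b with
  | [::], [::] => ~~ h
  | x :: t', y :: b' =>
      ice h true x y * row_count true t' b' + ice h false x y * row_count false t' b'
  | _, _ => 0
  end.

Fixpoint bool_seqs (k : nat) : seq (seq bool) :=
  if k is k'.+1 then [seq x :: s | x <- [:: true; false], s <- bool_seqs k']
  else [:: [::]].

Fixpoint grid_count (n : nat) (t : seq bool) : nat :=
  if n is n'.+1 then \sum_(b <- bool_seqs (size t)) row_count true t b * grid_count n' b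
  else all negb t.

Lemma big_bool_seqsS k (G : seq bool -> nat) :
  \sum_(b <- bool_seqs k.+1) G b =
  \sum_(s <- bool_seqs k) G (true :: s) + \sum_(s <- bool_seqs k) G (false :: s).
Proof. by rewrite /= !big_cat !big_map big_nil Monoid.mulm1. Qed.

Lemma mem_bool_seqs k b : size b = k -> b \in bool_seqs k.
Proof.
elim: k b => [|k IH] [|x b] //= [/IH b_k].
by rewrite !mem_cat; case: x; rewrite map_f ?orbT.
Qed.

Lemma big_bool_seqs m (G : seq bool -> nat) :
  \sum_(b <- bool_seqs m) G b = \sum_(v : {ffun 'I_m -> bool}) G (codom v).
Proof.
elim: m G => [|m IH] G.
  rewrite big_seq1 (eq_bigr (fun=> G [::])) ?sum_nat_const ?card_ffun ?card_ord ?mul1n //.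
  by move=> v _; rewrite codomE enum_ord0.
rewrite big_ffun_cons big_bool big_bool_seqsS !IH.
by congr (_ + _); apply: eq_bigr => g _; rewrite codom_ffun_cons.
Qed.

Lemma row_count_walk h t b : size b = size t ->
  row_count h t b =
  walk_sum (fun j h h' => ice h h' (nth false t j) (nth false b j)) (fun h => ~~ h : nat)
    (size t) h.
Proof. by elim: t b h => [|x t IH] [|y b] h //= [/IH b_t]; rewrite big_bool /= !b_t. Qed.

Lemma grid_count_walk n m (t : {ffun 'I_m -> bool}) :
  grid_count n (codom t) =
  walk_sum (fun _ (v v' : {ffun 'I_m -> bool}) => row_count true (codom v) (codom v'))
    (fun v : {ffun 'I_m -> bool} => [forall j, ~~ v j] : nat) n t.
Proof.
elim: n t => [|n IH] t /=.
  by congr nat_of_bool; apply/allP/forallP => [t_down j|t_down _ /codomP[j ->]];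
    [apply: t_down; apply: codom_f | apply: t_down].
rewrite size_codom card_ord big_bool_seqs; apply: eq_bigr => v _.
by rewrite (IH v).
Qed.

Definition row_valid m (h : {ffun 'I_m.+1 -> bool}) (t b : 'I_m -> bool) : bool :=
  [&& h ord0, ~~ h ord_max &
      [forall j, ice (h (widen_ord (leqnSn m) j)) (h (lift ord0 j)) (t j) (b j)]].

Lemma sum_row_valid m (t b : {ffun 'I_m -> bool}) :
  \sum_h (row_valid h t b : nat) = row_count true (codom t) (codom b).
Proof.
rewrite row_count_walk !size_codom // card_ord -sum_walks [RHS]big_mkcond.
apply: eq_bigr => h _; rewrite /row_valid eqb_id.
case: (h ord0) => //=; rewrite -mulnb nat_of_forall; congr (_ * _).
by apply: eq_bigr => j _; rewrite !nth_codom_ord.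
Qed.

Lemma inord_widen k (j : 'I_k) : inord j = widen_ord (leqnSn k) j :> 'I_k.+1.
Proof. by apply: val_inj; rewrite /= inordK // ltnS ltnW. Qed.

Lemma inord_lift k (j : 'I_k) : inord j.+1 = lift ord0 j :> 'I_k.+1.
Proof. by apply: val_inj; rewrite /= inordK // ltnS ltn_ord. Qed.

Lemma sv_valid_uncurry n lam m (hr : {ffun 'I_n -> {ffun 'I_m.+1 -> bool}})
    (vr : {ffun 'I_n.+1 -> {ffun 'I_m -> bool}}) :
  @sv_valid n lam m ([ffun p => hr p.1 p.2], [ffun p => vr p.1 p.2]) =
  [&& vr ord0 == [ffun j : 'I_m => top_up n lam (m - j)], [forall j, ~~ vr ord_max j] &
      [forall i, row_valid (hr i) (vr (widen_ord (leqnSn n) i)) (vr (lift ord0 i))]].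
Proof.
rewrite /sv_valid /=.
apply/and3P/and3P => [[/forallP hr_ends /forallP vr_ends /forallP ice_ok]|
                      [/eqP top /forallP bot /forallP rows]]; split.
- by apply/eqP/ffunP => j; have /andP[/eqP + _] := vr_ends j; rewrite !ffunE.
- by apply/forallP => j; have /andP[_ +] := vr_ends j; rewrite !ffunE.
- apply/forallP => i; have := hr_ends i; rewrite /row_valid !ffunE => /andP[-> ->] /=.
  apply/forallP => j; have /forallP/(_ j) := ice_ok i.
  by rewrite !ffunE /= inord_widen inord_lift inord_widen inord_lift.
- by apply/forallP => i; have /and3P[] := rows i; rewrite !ffunE => -> ->.
- by apply/forallP => j; rewrite !ffunE /= top ffunE eqxx bot.
- apply/forallP => i; apply/forallP => j; have /and3P[_ _ /forallP/(_ j)] := rows i.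
  by rewrite !ffunE /= inord_widen inord_lift inord_widen inord_lift.
Qed.

Lemma card_sv_valid n lam m :
  #|[pred s : sv_state n m | @sv_valid n lam m s]| =
  grid_count n (codom [ffun j : 'I_m => top_up n lam (m - j)]).
Proof.
rewrite -sum1_card big_mkcond /=.
transitivity (\sum_hor \sum_ver (@sv_valid n lam m (hor, ver) : nat)).
  by rewrite pair_big /=; apply: eq_bigr => -[hor ver] _; rewrite inE; case: sv_valid.
rewrite big_ffun_curry; under eq_bigr do rewrite big_ffun_curry.
under eq_bigr do under eq_bigr do rewrite sv_valid_uncurry.
rewrite exchange_big grid_count_walk -sum_walks [RHS]big_mkcond /=.
apply: eq_bigr => vr _; case: eqP => _ /=; last by rewrite big1.
under eq_bigr do rewrite -mulnb.
rewrite -big_distrr /=; congr (_ * _).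
under eq_bigr do rewrite nat_of_forall.
by under [RHS]eq_bigr do rewrite -sum_row_valid; rewrite bigA_distr_bigA.
Qed.

(** * The first row *)

Lemma grid_count_cons_false n t : grid_count n (false :: t) = grid_count n t.
Proof.
elim: n t => [|n IH] t //=.
rewrite big_bool_seqsS big1 ?add0n => [|s _]; last by rewrite /ice /= !mul0n.
by apply: eq_bigr => s _; rewrite IH /ice /= mul1n mul0n addn0.
Qed.

Lemma grid_count_nseq_false n a t : grid_count n (nseq a false ++ t) = grid_count n t.
Proof. by elim: a => [|a IH] //=; rewrite grid_count_cons_false. Qed.

(* [grid_count_after h n t pre] counts the fillings of an [n.+1]-row grid whose
   first row has already been filled on its left part, with bottom edges [pre]
   and last horizontal edge [h]; [t] are the top edges of the remaining part. *)
Definition grid_count_after h n t pre :=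
  \sum_(b <- bool_seqs (size t)) row_count h t b * grid_count n (pre ++ b).

Lemma grid_count_after_cons h n x t pre :
  grid_count_after h n (x :: t) pre =
    ice h true x true * grid_count_after true n t (rcons pre true)
  + ice h false x true * grid_count_after false n t (rcons pre true)
  + (ice h true x false * grid_count_after true n t (rcons pre false)
  + ice h false x false * grid_count_after false n t (rcons pre false)).
Proof.
rewrite /grid_count_after /= big_bool_seqsS /= !big_distrr -!big_split /=.
by apply: eq_bigr => s _; rewrite -!cat_rcons !mulnDl !mulnA.
Qed.

Lemma grid_count_after_nseq_false h n t a pre :
  grid_count_after h n t (nseq a false ++ pre) = grid_count_after h n t pre.
Proof.
by apply: eq_bigr => b _; rewrite -catA grid_count_nseq_false.
Qed.

Lemma grid_count_after_true_nseq n d w pre :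
  grid_count_after true n (nseq d false ++ w) pre =
  grid_count_after true n w (pre ++ nseq d false).
Proof.
elim: d pre => [|d IH] pre /=; first by rewrite cats0.
by rewrite grid_count_after_cons /ice /= !mul0n !add0n addn0 mul1n IH cat_rcons.
Qed.

Lemma grid_count_after_false_nseq n d w :
  grid_count_after false n (nseq d false ++ w) [::] =
  grid_count_after false n w [::]
  + \sum_(e < d) grid_count_after true n w (true :: nseq e false).
Proof.
elim: d => [|d IH] /=; first by rewrite big_ord0 addn0.
rewrite grid_count_after_cons /ice /= !mul0n !addn0 add0n !mul1n big_ord_recr /=.
rewrite (grid_count_after_nseq_false _ _ _ 1 [::]) IH grid_count_after_true_nseq.
by rewrite addnC -addnA.
Qed.

Definition lead_count n w d := grid_count n (true :: nseq d false ++ w).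

(* The up arrow on top of the first column comes out of the bottom of the first
   row in one of its first [d.+1] columns, followed by [e <= d] down arrows, or
   not at all; the columns to its left are frozen and can be deleted. *)
Lemma lead_count_rec n w d :
  lead_count n.+1 w d =
  grid_count_after false n w [::]
  + \sum_(e < d.+1) \sum_(b <- bool_seqs (size w)) row_count true w b * lead_count n b e.
Proof.
have -> : lead_count n.+1 w d = grid_count_after true n (true :: nseq d false ++ w) [::] by [].
rewrite grid_count_after_cons /ice /= !mul0n !addn0 !mul1n grid_count_after_true_nseq.
rewrite (grid_count_after_nseq_false _ _ _ 1 [::]) grid_count_after_false_nseq.
by rewrite big_ord_recr /= add0n addnCA (addnC (grid_count_after true _ _ _)).
Qed.

Lemma row_count_false_diag w : row_count false w w = 1.
Proof. by elim: w => [|[] w IH] //=; rewrite /ice /= IH. Qed.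

Fixpoint unset_first (s : seq bool) : seq bool :=
  match s with
  | [::] => [::]
  | true :: s' => false :: s'
  | false :: s' => false :: unset_first s'
  end.

Lemma size_unset_first s : size (unset_first s) = size s.
Proof. by elim: s => [|[] s IH] //=; rewrite IH. Qed.

Lemma count_unset_first s : count id (unset_first s) = (count id s).-1.
Proof. by elim: s => [|[] s IH] //=. Qed.

Lemma row_count_unset_first s : has id s -> row_count true s (unset_first s) = 1.
Proof. by elim: s => [|[] s IH] //= s_up; rewrite /ice /= ?row_count_false_diag ?IH. Qed.

Lemma lead_count_binomial_span n w :
  binomial_span n (count id w == n) (lead_count n.+1 w).
Proof.
elim: n w => [|n IH] w.
  apply: eq_binomial_span (binomial_span_le _ (binomial_span_cst _)).
    move=> d; rewrite lead_count_rec big1 ?addn0 // => e _.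
    by rewrite big1 // => b _; rewrite /lead_count /= muln0.
  case: eqP => // /eqP; rewrite -leqn0 leqNgt -has_count => /negbTE no_up.
  apply: leq_trans (leq_sum_mem _ (mem_bool_seqs (erefl (size w)))).
  by rewrite row_count_false_diag /= all_predC no_up.
apply: eq_binomial_span (fun d => esym (lead_count_rec n.+1 w d)) _.
apply: binomial_span_le (binomial_span_add
  (binomial_span_widen (ltn0Sn n) (binomial_span_cst _))
  (binomial_span_psumS (binomial_span_sum _ (fun b => binomial_span_scale _ (IH b))))).
case: eqP => // up_w; rewrite add0n.
apply: leq_trans (leq_sum_mem _ (mem_bool_seqs (size_unset_first w))).
by rewrite row_count_unset_first ?has_count ?up_w // count_unset_first up_w eqxx.
Qed.

(** * The top boundary *)

Lemma sorted_geq_nth (s : seq nat) i j : sorted geq s -> i <= j -> nth 0 s j <= nth 0 s i.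
Proof.
move=> s_sorted le_ij; have [j_s|s_j] := ltnP j (size s); last by rewrite nth_default.
have := sorted_leq_nth (fun y x z (h1 : x >= y) h2 => leq_trans h2 h1) leqnn 0 s_sorted.
by apply; rewrite ?inE //; apply: leq_ltn_trans j_s.
Qed.

(* For a grid with [n.+1] rows, [up_labels n rest] are the labels
   [lam_k + n + 2 - k], [k >= 2], of the columns with an up arrow on top, and
   [rest_word n rest] is the top boundary of the [n + lam_2] rightmost columns,
   read from left to right. *)
Definition up_labels n (rest : seq nat) := [seq nth 0 rest k + n - k | k <- iota 0 n].

Definition rest_word n (rest : seq nat) :=
  [seq (n + nth 0 rest 0 - i) \in up_labels n rest | i <- iota 0 (n + nth 0 rest 0)].

Lemma up_labels_bound n rest x :
  sorted geq rest -> x \in up_labels n rest -> 0 < x <= n + nth 0 rest 0.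
Proof.
move=> rest_sorted /mapP[k]; rewrite mem_iota => /andP[_ k_n] ->.
by have := sorted_geq_nth rest_sorted (leq0n k); lia.
Qed.

Lemma top_up_cons n l1 rest c :
  top_up n.+1 (l1 :: rest) c = (c == l1 + n.+1) || (c \in up_labels n rest).
Proof.
rewrite /top_up /= subn0; congr (_ || _).
rewrite -[1]addn0 iotaDl has_map; apply/hasP/mapP => [[k k_n /eqP ->]|[k k_n ->]].
  by exists k => //=; rewrite add0n; lia.
by exists k => //=; rewrite add0n; apply/eqP; lia.
Qed.

Lemma A_lead_count n l1 rest : sorted geq rest -> nth 0 rest 0 <= l1 ->
  A n.+1 (l1 :: rest) = lead_count n.+1 (rest_word n rest) (l1 - nth 0 rest 0).
Proof.
move=> rest_sorted l2_l1; set l2 := nth 0 rest 0.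
rewrite /A card_sv_valid /lead_count; congr grid_count.
transitivity [seq top_up n.+1 (l1 :: rest) (n.+1 + l1 - j) | j <- iota 0 (n.+1 + l1)].
  by rewrite codomE -val_enum_ord -map_comp; apply: eq_map => j; rewrite /= ffunE.
have -> : iota 0 (n.+1 + l1) =
          0 :: iota 1 (l1 - l2) ++ map (addn (l1 - l2).+1) (iota 0 (n + l2)).
  by rewrite -iotaDl addn0 -[0 :: _]/(iota 0 1 ++ _) -!iotaD; congr iota; lia.
rewrite /= map_cat top_up_cons subn0 (addnC l1) eqxx /=; congr (_ :: _ ++ _).
  rewrite -[in RHS](size_iota 1 (l1 - l2)).
  rewrite -(size_map (fun j => top_up n.+1 (l1 :: rest) (n.+1 + l1 - j))).
  apply/all_pred1P; rewrite all_map; apply/allP => j.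
  rewrite mem_iota /= top_up_cons => /andP[j_gt0 j_lt].
  apply/eqP/negbTE; rewrite negb_or; apply/andP; split; first by apply/eqP; lia.
  by apply/negP => /(up_labels_bound rest_sorted); lia.
rewrite -map_comp; apply/eq_in_map => i; rewrite mem_iota => /andP[_ i_lt] /=.
rewrite top_up_cons (_ : n.+1 + l1 - ((l1 - l2).+1 + i) = n + l2 - i); last by lia.
by rewrite (_ : (n + l2 - i == l1 + n.+1) = false) //; apply/negbTE/eqP; lia.
Qed.

Lemma count_subset_uniq (T : eqType) (S s : seq T) :
  uniq S -> uniq s -> {subset S <= s} -> count (mem S) s = size S.
Proof.
move=> S_uniq s_uniq S_s; rewrite -size_filter; apply/perm_size/uniq_perm => //.
  exact: filter_uniq.
by move=> x; rewrite mem_filter; apply/andP/idP => [[]//|x_S]; split => //; apply: S_s.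
Qed.

Lemma count_rest_word n rest :
  size rest = n -> sorted geq rest -> count id (rest_word n rest) = n.
Proof.
move=> size_rest rest_sorted; rewrite /rest_word count_map.
set N := n + nth 0 rest 0.
have labels_inj : {in iota 0 n &, injective (fun k => nth 0 rest k + n - k)}.
  move=> i j; rewrite !mem_iota => /andP[_ i_n] /andP[_ j_n] eq_ij.
  have [lt_ij|lt_ji|//] := ltngtP i j.
    by have := sorted_geq_nth rest_sorted (ltnW lt_ij); lia.
  by have := sorted_geq_nth rest_sorted (ltnW lt_ji); lia.
rewrite -(count_map (fun i => N - i) (mem (up_labels n rest))).
rewrite count_subset_uniq ?size_map ?size_iota //.
- by rewrite map_inj_in_uniq ?iota_uniq.
- rewrite map_inj_in_uniq ?iota_uniq // => i j; rewrite !mem_iota.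
  by move=> /andP[_ i_N] /andP[_ j_N]; lia.
- move=> x x_up; have /andP[x_gt0 x_N] := up_labels_bound rest_sorted x_up.
  by apply/mapP; exists (N - x); rewrite ?mem_iota; lia.
Qed.

Local Open Scope ring_scope.

Fixpoint binom_poly (s j : nat) : {poly rat} :=
  if j is j'.+1 then (j'.+1%:R)^-1 *: (binom_poly s j' * ('X - (s + j')%:R%:P)) else 1.

Lemma size_binom_poly s j : size (binom_poly s j) = j.+1.
Proof.
elim: j => [|j IH] /=; first by rewrite size_poly1.
rewrite size_scale; last by rewrite invr_eq0 pnatr_eq0.
rewrite size_Mmonic ?monicXsubC ?size_XsubC ?IH ?addn2 //.
by rewrite -size_poly_eq0 IH.
Qed.

Lemma horner_binom_poly s j x : (s <= x)%N -> (binom_poly s j).[x%:R] = 'C(x - s, j)%:R.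
Proof.
move=> le_sx; elim: j => [|j IH] /=; first by rewrite hornerC bin0.
rewrite hornerZ hornerM IH hornerXsubC.
have [le_x|lt_x] := leqP (s + j) x; last by rewrite !bin_small ?mul0r ?mulr0 //; lia.
rewrite -natrB // -natrM (_ : (x - (s + j) = x - s - j)%N) 1?mulnC -?mul_bin_left; last by lia.
by rewrite natrM mulrA mulVf ?pnatr_eq0 ?mul1r.
Qed.

Lemma binomial_span_poly k f s : binomial_span k 1 f ->
  exists2 p : {poly rat}, size p = k.+1 & forall x, (s <= x)%N -> (f (x - s)%N)%:R = p.[x%:R].
Proof.
move=> [a a_k f_a]; exists (\sum_(j < k.+1) (a j)%:R *: binom_poly s j).
  rewrite big_ord_recr /= addrC size_polyDl size_scale ?size_binom_poly ?pnatr_eq0 -?lt0n //.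
  apply: leq_ltn_trans (size_sum _ _ _) _; rewrite ltnS; apply/bigmax_leqP => j _.
  by apply: leq_trans (size_scale_leq _ _) _; rewrite size_binom_poly.
move=> x le_sx; rewrite f_a horner_sum natr_sum; apply: eq_bigr => j _.
by rewrite hornerZ horner_binom_poly // natrM.
Qed.

Theorem theorem3 (n : nat) (rest : seq nat) :
  (1 <= n)%N -> size rest = n.-1 -> sorted geq rest ->
  exists p : {poly rat}, size p = n /\
    forall l1 : nat, (nth 0 rest 0 <= l1)%N ->
      (A n (l1 :: rest))%:R = p.[l1%:R].
Proof.
case: n => [//|n] _ /= size_rest rest_sorted.
have lead_span := lead_count_binomial_span n (rest_word n rest).
rewrite count_rest_word // eqxx in lead_span.
have [p size_p p_lead] := binomial_span_poly (nth 0 rest 0) lead_span.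
by exists p; split=> // l1 l2_l1; rewrite A_lead_count // p_lead.
Qed.
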